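(* Let $\Gamma_i\in\mathbb{R}^{m\times m}$ with $\|\Gamma_i\|_2\le1$ for all $i\in[n]$, where $\|\cdot\|_2$ is the matrix operator norm. Let $\mathbf{P}\in\mathbb{R}^{nm\times nm}$ have $n^2$ blocks such that the $(i,j)$th block is $\Gamma_i\Gamma_j^\top$ if $i\ne j$, and $I$ otherwise. Then $\mathbf{P}\succeq0$ and $\|\mathbf{P}\|_*\le mn$, where $\|\cdot\|_*$ denotes the nuclear norm. *)

From HB Require Import structures.
From mathcomp Require Import all_boot all_order all_algebra.
Set Implicit Arguments. Unset Strict Implicit. Unset Printing Implicit Defensive.
Import Order.TTheory GRing.Theory Num.Theory.
Local Open Scope ring_scope.

(* Splitting an index k < n*m into (block index k %/ m, offset k %% m). *)
Lemma blk_row_proof n m (k : 'I_(n * m)) : (k %/ m < n)%N.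
Proof.
case: k => k /=; case: m => [|m]; first by rewrite muln0.
by move=> hk; rewrite ltn_divLR.
Qed.

Lemma blk_col_proof n m (k : 'I_(n * m)) : (k %% m < m)%N.
Proof.
case: k => k /=; case: m => [|m]; first by rewrite muln0.
by move=> _; rewrite ltn_pmod.
Qed.

Definition blk_row n m (k : 'I_(n * m)) : 'I_n := Ordinal (blk_row_proof k).
Definition blk_col n m (k : 'I_(n * m)) : 'I_m := Ordinal (blk_col_proof k).

(* Operator 2-norm at most 1:  ||G x||_2 <= ||x||_2 for all x
   (squared form, x a column vector). *)
Definition opnorm_le1 (R : realFieldType) m (G : 'M[R]_m) : Prop :=
  forall x : 'cV[R]_m, ((G *m x)^T *m (G *m x)) 0 0 <= (x^T *m x) 0 0.

Definition psd (R : realFieldType) N (A : 'M[R]_N) : Prop :=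
  A^T = A /\ forall x : 'cV[R]_N, 0 <= (x^T *m A *m x) 0 0.

Definition orthogonal_mx (R : realFieldType) N (U : 'M[R]_N) : Prop :=
  U^T *m U = 1%:M.

Definition is_svd (R : realFieldType) N (A U V : 'M[R]_N) (d : 'rV[R]_N) : Prop :=
  [/\ orthogonal_mx U, orthogonal_mx V, (forall k, 0 <= d 0 k)
    & A = U *m diag_mx d *m V^T].

(* Nuclear norm of A is at most c: the sum of the singular values of A
   (for any SVD of A) is at most c. *)
Definition nuclear_norm_le (R : realFieldType) N (A : 'M[R]_N) (c : R) : Prop :=
  forall U V d, is_svd A U V d -> \sum_k d 0 k <= c.

Definition Pmat (R : realFieldType) n m (G : 'I_n -> 'M[R]_m) : 'M[R]_(n * m) :=
  \matrix_(k, l)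
    (if blk_row k == blk_row l then (1%:M : 'M[R]_m) (blk_col k) (blk_col l)
     else (G (blk_row k) *m (G (blk_row l))^T) (blk_col k) (blk_col l)).

From HB Require Import structures.
From mathcomp Require Import all_boot all_order all_algebra.
From mathcomp Require Import lra.
Import Order.TTheory GRing.Theory Num.Theory.
Local Open Scope ring_scope.

(* Writing Gamma for the nm x m matrix stacking the G_i, P is the sum of the
   block-diagonal matrix with blocks I - G_i G_i^T and the Gram matrix
   Gamma Gamma^T.  Both are positive semidefinite, the first because
   ||G_i^T|| = ||G_i|| <= 1, so P is.  For a positive semidefinite P with SVD
   P = U diag(d) V^T, the matrix W = V U^T is orthogonal and
   sum d = tr (P W) <= tr P = mn, as (I - W)^T P (I - W) has nonnegative
   trace. *)

Set Implicit Arguments.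
Unset Strict Implicit.

Section BlockIndex.
Variables n m : nat.

Lemma blk_idx_proof (i : 'I_n) (c : 'I_m) : (i * m + c < n * m)%N.
Proof.
apply: (@leq_trans (i.+1 * m)); first by rewrite mulSn addnC ltn_add2r.
by rewrite leq_mul2r ltn_ord orbT.
Qed.

Definition blk_idx (i : 'I_n) (c : 'I_m) : 'I_(n * m) :=
  Ordinal (blk_idx_proof i c).

Lemma blk_row_idx i c : blk_row (blk_idx i c) = i.
Proof.
apply: val_inj => /=; have lt_cm := ltn_ord c.
by rewrite divnMDl ?(leq_ltn_trans _ lt_cm) // divn_small // addn0.
Qed.

Lemma blk_col_idx i c : blk_col (blk_idx i c) = c.
Proof. by apply: val_inj => /=; rewrite modnMDl modn_small. Qed.

Lemma blk_idxK k : blk_idx (blk_row k) (blk_col k) = k.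
Proof. by apply: val_inj => /=; rewrite -divn_eq. Qed.

Lemma sum_blk_idx (V : nmodType) (F : 'I_(n * m) -> V) :
  \sum_k F k = \sum_i \sum_c F (blk_idx i c).
Proof.
rewrite pair_big /= (reindex (fun p : 'I_n * 'I_m => blk_idx p.1 p.2)) //=.
exists (fun k => (blk_row k, blk_col k)) => [[i c] _ | k _] /=.
  by rewrite blk_row_idx blk_col_idx.
by rewrite blk_idxK.
Qed.

End BlockIndex.

Section PositiveSemidefinite.
Variable R : realFieldType.

Lemma quad_formE N (A : 'M[R]_N) (x : 'cV[R]_N) :
  (x^T *m A *m x) 0 0 = \sum_k \sum_l x k 0 * A k l * x l 0.
Proof.
rewrite mxE exchange_big; apply: eq_bigr => l _.
by rewrite !mxE mulr_suml; apply: eq_bigr => k _; rewrite mxE.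
Qed.

Lemma mxBE p q (A B : 'M[R]_(p, q)) i j : (A - B) i j = A i j - B i j.
Proof. by rewrite !mxE. Qed.

Lemma sqnorm_ge0 N (y : 'cV[R]_N) : 0 <= (y^T *m y) 0 0.
Proof. by rewrite mxE; apply: sumr_ge0 => k _; rewrite mxE -expr2 sqr_ge0. Qed.

Lemma psdD N (A B : 'M[R]_N) : psd A -> psd B -> psd (A + B).
Proof.
move=> [symA posA] [symB posB]; split; first by rewrite raddfD /= symA symB.
by move=> x; rewrite mulmxDr mulmxDl mxE addr_ge0.
Qed.

Lemma psd_mulmx_tr N k (g : 'M[R]_(N, k)) : psd (g *m g^T).
Proof.
split=> [|x]; first by rewrite trmx_mul trmxK.
by rewrite mulmxA -mulmxA -{1}(trmxK g) -trmx_mul sqnorm_ge0.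
Qed.

(* With z = G^T y one has <y, G z> = |z|^2, so
   0 <= |y - G z|^2 = |y|^2 - 2 |z|^2 + |G z|^2 <= |y|^2 - |z|^2. *)
Lemma opnorm_le1_tr k (G : 'M[R]_k) : opnorm_le1 G -> opnorm_le1 G^T.
Proof.
move=> hG y; set z := G^T *m y.
have yGz : (y^T *m (G *m z)) 0 0 = (z^T *m z) 0 0.
  by rewrite /z trmx_mul trmxK mulmxA.
have Gzy : ((G *m z)^T *m y) 0 0 = (y^T *m (G *m z)) 0 0.
  by rewrite -[y in LHS]trmxK -trmx_mul mxE.
have := sqnorm_ge0 (y - G *m z).
rewrite (raddfB (@trmx R k 1)) !mulmxBr !mulmxBl !mxBE Gzy yGz.
have := hG z; lra.
Qed.

Lemma psd_1_sub_mulmx_tr k (G : 'M[R]_k) :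
  opnorm_le1 G -> psd (1%:M - G *m G^T).
Proof.
move=> /opnorm_le1_tr hGT; split=> [|x].
  by rewrite raddfB /= trmx1 trmx_mul trmxK.
rewrite mulmxBr mulmx1 mulmxBl mxBE subr_ge0 mulmxA -mulmxA.
by rewrite -{1}(trmxK G) -trmx_mul hGT.
Qed.

Lemma psd_mxtrace_ge0 N (P A : 'M[R]_N) : psd P -> 0 <= \tr (A^T *m P *m A).
Proof.
move=> [_ posP]; apply: sumr_ge0 => k _.
have := posP (col k A); congr (_ <= _); rewrite !mxE.
apply: eq_bigr => l _; rewrite !mxE; congr (_ * _).
by apply: eq_bigr => j _; rewrite !mxE.
Qed.

Lemma psd_mxtrace_mulmx_le N (P W : 'M[R]_N) :
  psd P -> W *m W^T = 1%:M -> \tr (P *m W) <= \tr P.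
Proof.
move=> psdP orthoW; have := psd_mxtrace_ge0 (1%:M - W) psdP.
rewrite (raddfB (@trmx _ _ _)) /= trmx1 !mulmxBl !mulmxBr !mul1mx !mulmx1.
rewrite !(raddfB (@mxtrace _ _)) /=.
have -> : \tr (W^T *m P) = \tr (P *m W).
  by rewrite -mxtrace_tr trmx_mul trmxK psdP.1.
have -> : \tr (W^T *m P *m W) = \tr P.
  by rewrite mxtrace_mulC mulmxA orthoW mul1mx.
lra.
Qed.

Lemma psd_nuclear_norm_le N (P : 'M[R]_N) : psd P -> nuclear_norm_le P (\tr P).
Proof.
move=> psdP U V d [orthoU orthoV _ defP].
have diag_d : U^T *m P *m V = diag_mx d.
  by rewrite defP !mulmxA orthoU mul1mx -mulmxA orthoV mulmx1.
rewrite -mxtrace_diag -diag_d -mulmxA mxtrace_mulC -mulmxA.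
apply: psd_mxtrace_mulmx_le => //.
by rewrite trmx_mul trmxK mulmxA -(mulmxA V) orthoU mulmx1 mulmx1C.
Qed.

End PositiveSemidefinite.

Section BlockMatrices.
Variables (R : realFieldType) (n m : nat).

Definition blkdiag_mx (B : 'I_n -> 'M[R]_m) : 'M[R]_(n * m) :=
  \matrix_(k, l) if blk_row k == blk_row l
                 then B (blk_row k) (blk_col k) (blk_col l) else 0.

Definition col_blk_mx k (G : 'I_n -> 'M[R]_(m, k)) : 'M[R]_(n * m, k) :=
  \matrix_(l, e) G (blk_row l) (blk_col l) e.

Lemma blk_matrixP (A B : 'M[R]_(n * m)) :
  (forall i c j d,
     A (blk_idx i c) (blk_idx j d) = B (blk_idx i c) (blk_idx j d)) ->
  A = B.
Proof.
by move=> eqAB; apply/matrixP => k l; rewrite -(blk_idxK k) -(blk_idxK l).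
Qed.

Lemma blkdiag_mx_idx B i c j d :
  blkdiag_mx B (blk_idx i c) (blk_idx j d) = if i == j then B i c d else 0.
Proof. by rewrite mxE !blk_row_idx !blk_col_idx; case: eqP => // ->. Qed.

Lemma psd_blkdiag_mx B : (forall i, psd (B i)) -> psd (blkdiag_mx B).
Proof.
move=> psdB; split=> [|x].
  apply: blk_matrixP => i c j d; rewrite mxE !blkdiag_mx_idx eq_sym.
  by case: eqP => // ->; rewrite -{1}(psdB j).1 mxE.
pose xi i := \col_c x (blk_idx i c) 0.
suff -> : (x^T *m blkdiag_mx B *m x) 0 0 = \sum_i ((xi i)^T *m B i *m xi i) 0 0.
  by apply: sumr_ge0 => i _; apply: (psdB i).2.
rewrite quad_formE sum_blk_idx; apply: eq_bigr => i _.
rewrite quad_formE; apply: eq_bigr => c _.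
rewrite sum_blk_idx (bigD1 i) //= [X in _ + X]big1 => [|j /negPf neq_ji].
  by rewrite addr0; apply: eq_bigr => d _; rewrite blkdiag_mx_idx eqxx !mxE.
by apply: big1 => d _; rewrite blkdiag_mx_idx eq_sym neq_ji mulr0 mul0r.
Qed.

Lemma Pmat_blk (G : 'I_n -> 'M[R]_m) :
  Pmat G = blkdiag_mx (fun i => 1%:M - G i *m (G i)^T)
           + col_blk_mx G *m (col_blk_mx G)^T.
Proof.
apply: blk_matrixP => i c j d.
have gram : (col_blk_mx G *m (col_blk_mx G)^T) (blk_idx i c) (blk_idx j d)
            = (G i *m (G j)^T) c d.
  rewrite !mxE; apply: eq_bigr => e _.
  by rewrite !mxE !blk_row_idx !blk_col_idx.
rewrite [LHS]mxE !blk_row_idx !blk_col_idx [RHS]mxE blkdiag_mx_idx gram.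
by case: eqP => [<- | _]; rewrite ?add0r // mxBE subrK.
Qed.

Lemma mxtrace_Pmat (G : 'I_n -> 'M[R]_m) : \tr (Pmat G) = (n * m)%:R.
Proof.
rewrite /mxtrace (eq_bigr (fun _ => 1)) ?sumr_const ?card_ord // => k _.
by rewrite !mxE !eqxx.
Qed.

End BlockMatrices.

Theorem lemma18 (R : rcfType) (n m : nat) (G : 'I_n -> 'M[R]_m)
  (hG : forall i, opnorm_le1 (G i)) :
  psd (Pmat G) /\ nuclear_norm_le (Pmat G) (m * n)%:R.
Proof.
have psdP : psd (Pmat G).
  rewrite Pmat_blk; apply: psdD; last exact: psd_mulmx_tr.
  by apply: psd_blkdiag_mx => i; apply: psd_1_sub_mulmx_tr.
split=> //; rewrite (mulnC m n) -(mxtrace_Pmat G).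
exact: psd_nuclear_norm_le.
Qed.
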